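(* Let $G$ be a finite simple graph with maximum degree $d$, equipped with a rotation system, and let $L\ge 2$ be an even integer. Then $G$ has an $L$-localized edge coloring using at most $\min\{d,2L\}+1$ colors.
   Context: A rotation system of $G$ specifies, for each vertex $u$, a cyclic (clockwise) ordering of the edges incident to $u$. For an edge $e$ incident to $u$, if the clockwise cyclic ordering of edges at $u$ is $(l_1,\dots,l_k)$ with $e=l_i$, the $L$-neighborhood of $e$ around $u$ is the set of edges $l_{i-L/2},\dots,l_{i-1},l_{i+1},\dots,l_{i+L/2}$ (indices taken cyclically), i.e., the $L/2$ edges before and the $L/2$ edges after $e$ in the ordering, excluding $e$ itself. An $L$-localized edge coloring is an assignment of colors to the edges of $G$ such that for every edge $e=(u,v)$, no edge in the $L$-neighborhood of $e$ around $u$ and no edge in the $L$-neighborhood of $e$ around $v$ has the same color as $e$. *)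

From mathcomp Require Import all_boot.
Set Implicit Arguments. Unset Strict Implicit. Unset Printing Implicit Defensive.

(* A finite simple graph is a symmetric irreflexive relation [e] on a finType [V].
   Since the graph is simple, an edge (u,v) incident to u is identified with
   its other endpoint v. *)

Definition deg (V : finType) (e : rel V) (u : V) : nat := #|[set v | e u v]|.
Definition maxdeg (V : finType) (e : rel V) : nat := \max_(u : V) deg e u.

(* A rotation system: for each vertex u, a cyclic (clockwise) ordering
   rot u = (l_1,...,l_k) of the edges at u, each edge (u,v) listed by its
   other endpoint v, each exactly once. *)
Definition is_rotation (V : finType) (e : rel V) (rot : V -> seq V) : Prop :=
  forall u, uniq (rot u) /\ (forall v, (v \in rot u) = e u v).

(* [w] (edge (u,w)) is in the L-neighborhood of the edge (u,v) around u:
   if rot u = (l_0,...,l_{k-1}) with v = l_i, then w = l_{i+j} or w = l_{i-j}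
   (indices mod k) for some 1 <= j <= L/2, and w <> v. *)
Definition in_Lnbhd (V : finType) (rot : V -> seq V) (L : nat) (u v w : V) : bool :=
  let s := rot u in
  let k := size s in
  let i := index v s in
  (w != v) &&
  has (fun j => (w == nth v s ((i + j) %% k))
                || (w == nth v s ((i + (k - j %% k)) %% k)))
      (iota 1 L./2).

Definition edge_coloring (V : finType) (e : rel V) (c : V -> V -> nat) : Prop :=
  forall u v, e u v -> c u v = c v u.

(* L-localized: for every edge (u,v), no edge in its L-neighborhood around u
   has the same color (the condition around v is the instance (v,u)). *)
Definition L_localized (V : finType) (e : rel V) (rot : V -> seq V) (L : nat)
  (c : V -> V -> nat) : Prop :=
  forall u v w, e u v -> in_Lnbhd rot L u v w -> c u w != c u v.

From mathcomp Require Import all_boot.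
From mathcomp Require Import zify.
Set Implicit Arguments. Unset Strict Implicit. Unset Printing Implicit Defensive.

(* The bound is the better of two independent constructions, both built edge by
   edge ([edge_induction]) on partial colorings of a symmetric edge set [F].
   - If d <= 2L we use Vizing's theorem: a proper coloring with d + 1 colors is
     L-localized, because an edge is never its own L-neighbour. Vizing's
     extension step is the classical fan argument: grow a fan at [x] from the
     uncolored edge [x y0]; either it can be shifted to free a color for
     [x y0], or an [al]/[g] Kempe chain swap (al missing at x, g missing at the
     fan's end) makes a shift possible. The key combinatorial fact is that a
     Kempe graph has maximum degree two, so one component cannot contain three
     vertices of degree at most one ([three_ends]).
   - If d > 2L a greedy coloring suffices: a new edge has at most L colored
     L-neighbours around each endpoint, so one of 2L + 1 colors is free. *)

Section PartialColorings.
Variable V : finType.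
Implicit Types (F : {set V * V}) (c : V -> V -> nat).

Definition sym_edges F := forall u v, (u,v) \in F -> (v,u) \in F.

Definition coloring_on F c k := forall u v, (u,v) \in F -> c u v = c v u /\ c u v < k.

Definition proper_on F c :=
  forall u v w, (u,v) \in F -> (u,w) \in F -> c u v = c u w -> v = w.

Definition missing F c a g : bool := [forall w, ((a,w) \in F) ==> (c a w != g)].

Lemma missingP F c a g : reflect (forall w, (a,w) \in F -> c a w != g) (missing F c a g).
Proof.
apply: (iffP forallP) => [H w Hw|H w]; first by move/implyP: (H w); apply.
by apply/implyP; apply: H.
Qed.

Lemma missing_neq F c a g w : missing F c a g -> (a,w) \in F -> c a w != g.
Proof. by move/missingP; apply. Qed.

Lemma missing_exists F c a k :
  #|[set w | (a,w) \in F]| < k -> exists2 g, g < k & missing F c a g.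
Proof.
move=> hdeg; case: (boolP (has (missing F c a) (iota 0 k))) => [/hasP [g]|/hasPn H].
  by rewrite mem_iota add0n => /andP [_ gk] mg; exists g.
pose S := [seq c a w | w <- enum [set w | (a,w) \in F]].
have sub : {subset iota 0 k <= S}.
  move=> g /H ng; apply: contraNT ng => gS; apply/missingP => w aw.
  by apply: contraNneq gS => <-; rewrite map_f // mem_enum inE.
have := uniq_leq_size (iota_uniq 0 k) sub.
by rewrite size_iota size_map -cardE leqNgt hdeg.
Qed.

Definition add_edge F x y : {set V * V} := F :|: [set (x,y); (y,x)].

Lemma in_add_edge F x y u v : ((u,v) \in add_edge F x y) =
  [|| (u,v) \in F, (u == x) && (v == y) | (u == y) && (v == x)].
Proof. by rewrite !inE -!pair_eqE. Qed.

Lemma sym_add_edge F x y : sym_edges F -> sym_edges (add_edge F x y).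
Proof.
move=> hF u v; rewrite !in_add_edge.
by case/or3P => [/hF ->//|/andP [/eqP -> /eqP ->]|/andP [/eqP -> /eqP ->]]; rewrite !eqxx ?orbT.
Qed.

Lemma edge_induction (e : rel V) (P : {set V * V} -> Prop) : symmetric e ->
  (forall F u v, sym_edges F -> (forall a b, (a,b) \in F -> e a b) -> e u v ->
     (u,v) \notin F -> P F -> P (add_edge F u v)) ->
  P set0 -> P [set p | e p.1 p.2].
Proof.
move=> e_sym hext h0; set E := [set p | e p.1 p.2].
suff H n F : #|E :\: F| <= n -> sym_edges F -> (forall a b, (a,b) \in F -> e a b) ->
    P F -> P E.
  by apply: (H #|E :\: set0| set0) => // a b; rewrite inE.
elim: n F => [|n IH] F hn hs hsub hP.
  have -> // : E = F; apply/eqP; rewrite eqEsubset -setD_eq0 -cards_eq0.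
  by rewrite -leqn0 hn; apply/subsetP => -[a b] /hsub; rewrite inE.
case: (set_0Vmem (E :\: F)) => [h|[[u v]]].
  have -> // : E = F; apply/eqP; rewrite eqEsubset -setD_eq0 h eqxx.
  by apply/subsetP => -[a b] /hsub; rewrite inE.
rewrite !inE /= => /andP [nuv euv].
apply: (IH (add_edge F u v)).
- suff : #|E :\: add_edge F u v| < #|E :\: F| by move: hn; lia.
  apply: proper_card; apply/properP; split; first by apply/setDS/subsetUl.
  by exists (u,v); rewrite !inE ?nuv ?eqxx ?orbT.
- exact: sym_add_edge.
- move=> a b; rewrite in_add_edge.
  by case/or3P => [/hsub //|/andP [/eqP -> /eqP ->]|/andP [/eqP -> /eqP ->]]; rewrite // e_sym.
- exact: hext.
Qed.

Definition swap (al be g : nat) := if g == al then be else if g == be then al else g.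

Lemma swapK al be : involutive (swap al be).
Proof.
move=> g; rewrite /swap; case: (eqVneq g al) => [->|h1].
  by rewrite eqxx; case: (eqVneq be al) => [->|h] //; rewrite eqxx.
case: (eqVneq g be) => [->|h2]; first by rewrite eqxx.
by rewrite (negbTE h1) (negbTE h2).
Qed.

Lemma swap_id al be g : g != al -> g != be -> swap al be g = g.
Proof. by rewrite /swap => /negbTE -> /negbTE ->. Qed.

Definition swap_on (H : {set V}) al be c : V -> V -> nat :=
  fun u v => if u \in H then swap al be (c u v) else c u v.

Lemma missing_swap_on F H al be c a g : missing F (swap_on H al be c) a g =
  if a \in H then missing F c a (swap al be g) else missing F c a g.
Proof.
rewrite /swap_on; case aH: (a \in H); apply/missingP/missingP => h w aw; have := h w aw;
  rewrite aH //.
  by apply: contra => /eqP ->; rewrite swapK.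
by apply: contra => /eqP <-; rewrite swapK.
Qed.

Section Kempe.
Variables (F : {set V * V}) (c : V -> V -> nat) (k al be : nat).
Hypotheses (hsym : sym_edges F) (hok : coloring_on F c k) (hpr : proper_on F c).

Definition kempe : rel V := fun u v => ((u,v) \in F) && ((c u v == al) || (c u v == be)).

Lemma kempe_sym : symmetric kempe.
Proof.
move=> u v; rewrite /kempe; apply/idP/idP => /andP [uv h]; have [E _] := hok uv;
  by rewrite hsym //= -?E // E.
Qed.

(* A vertex has at most two Kempe neighbours, one per color. *)
Lemma kempe_deg2 a u v w : kempe a u -> kempe a v -> kempe a w -> [\/ u = v, u = w | v = w].
Proof.
move=> /andP [au cu] /andP [av cv] /andP [aw cw].
have same x y : (a,x) \in F -> (a,y) \in F -> c a x = c a y -> x = y by apply: hpr.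
by case/orP: cu => /eqP hu; case/orP: cv => /eqP hv; case/orP: cw => /eqP hw;
  first [apply: Or31; apply: same; congruence | apply: Or32; apply: same; congruence
        | apply: Or33; apply: same; congruence].
Qed.

Lemma kempe_end a : missing F c a al || missing F c a be ->
  forall u v, kempe a u -> kempe a v -> u = v.
Proof.
move=> ma u v /andP [au cu] /andP [av cv]; apply: (hpr au av).
by case/orP: ma => /missingP m; move: (m _ au) (m _ av);
  case/orP: cu => /eqP ->; case/orP: cv => /eqP ->; rewrite ?eqxx.
Qed.

Definition kempe_comp a : {set V} := [set w | connect kempe a w].

Lemma swap_kempe_comp a (hal : al < k) (hbe : be < k) :
  coloring_on F (swap_on (kempe_comp a) al be c) k /\
  proper_on F (swap_on (kempe_comp a) al be c).
Proof.
have csym := sym_connect_sym kempe_sym.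
have closed u v : (u,v) \in F -> (c u v == al) || (c u v == be) ->
    (u \in kempe_comp a) = (v \in kempe_comp a).
  by move=> uv h; rewrite !inE; apply: (same_connect1r csym); rewrite /kempe uv h.
split=> [u v uv|u v w uv uw]; rewrite /swap_on; last first.
  case: (u \in _); last exact: hpr.
  by move=> h; apply: hpr uv uw _; rewrite -(swapK al be (c u v)) h swapK.
have [e1 e2] := hok uv.
have bd : swap al be (c u v) < k by rewrite /swap; case: ifP => //; case: ifP.
case: (boolP ((c u v == al) || (c u v == be))) => ab.
  by rewrite -(closed _ _ uv ab) -e1; case: (u \in _).
move/norP: ab => [n1 n2]; rewrite -e1 swap_id //.
by case: (u \in _); case: (v \in _).
Qed.

End Kempe.

Section Paths.
Variable r : rel V.
Hypothesis rsym : symmetric r.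
Hypothesis deg2 : forall a u v w, r a u -> r a v -> r a w -> [\/ u = v, u = w | v = w].

(* Two simple paths leaving the edge [ba] in the same direction, in a graph of
   maximum degree two, agree until one ends at a vertex of degree one. *)
Lemma paths_diverge (s : seq V) : forall t a b, r a b -> r b a ->
  uniq (b :: a :: s) -> uniq (b :: a :: t) -> path r a s -> path r a t ->
  last a s != last a t ->
  (forall u v, r (last a s) u -> r (last a s) v -> u = v) ->
  (forall u v, r (last a t) u -> r (last a t) v -> u = v) -> False.
Proof.
elim: s => [|d s IH] [|d' t] a b rab rba u1 u2 p1 p2 //=.
- by rewrite eqxx.
- move=> _ h1 _; move: p2 => /= /andP [rad _].
  by move: u2; rewrite -(h1 _ _ rab rad) /= !in_cons eqxx !orbT.
- move=> _ _ h2; move: p1 => /= /andP [rad _].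
  by move: u1; rewrite -(h2 _ _ rab rad) /= !in_cons eqxx !orbT.
move: p1 p2 => /= /andP [rad p1] /andP [rad' p2] nl h1 h2.
have bd : b != d by apply: contraTneq u1 => ->; rewrite /= !in_cons eqxx !orbT.
have bd' : b != d' by apply: contraTneq u2 => ->; rewrite /= !in_cons eqxx !orbT.
have dd : d = d'.
  by case: (deg2 rab rad rad') => [E|E|//]; [rewrite E eqxx in bd|rewrite E eqxx in bd'].
subst d'; apply: (IH t d a) => //; first by rewrite rsym.
- by move: u1 => /andP [].
- by move: u2 => /andP [].
Qed.

Lemma connect_uniq_path x y :
  connect r x y -> exists s, [/\ path r x s, uniq (x :: s) & last x s = y].
Proof. by move/connectP => [s ps ->]; case: (shortenP ps) => s' ps' us' _; exists s'. Qed.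

Lemma three_ends x p q : (forall u v, r x u -> r x v -> u = v) ->
  (forall u v, r p u -> r p v -> u = v) -> (forall u v, r q u -> r q v -> u = v) ->
  p != x -> q != x -> p != q -> connect r x p -> connect r x q -> False.
Proof.
move=> hx hp hq px qx pq /connect_uniq_path [s [ps us Ep]] /connect_uniq_path [t [pt ut Eq]].
subst p q.
case: s ps us px hp pq => [|d s] ps us px hp pq; first by rewrite eqxx in px.
case: t pt ut qx hq pq => [|d' t] pt ut qx hq pq; first by rewrite eqxx in qx.
move: ps pt => /= /andP [rxd ps] /andP [rxd' pt].
have E := hx _ _ rxd rxd'; subst d'.
by apply: (paths_diverge (s := s) (t := t) (a := d) (b := x)) => //; rewrite rsym.
Qed.

End Paths.
End PartialColorings.

Section Vizing.
Variables (V : finType) (e : rel V) (d k : nat).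
Hypotheses (e_irr : irreflexive e) (hdeg : forall a, #|[set w | e a w]| <= d) (hdk : d < k).
Variables (F : {set V * V}) (x y0 : V).
Hypotheses (hsym : sym_edges F) (hsub : forall u v, (u,v) \in F -> e u v)
  (hxy0 : e x y0) (nF : (x,y0) \notin F).

Local Notation F' := (add_edge F x y0).

Lemma x_neq_y0 : x != y0.
Proof. by apply: contraTneq hxy0 => ->; rewrite e_irr. Qed.

Lemma add_edge_off_x u v : (u,v) \in F' -> u != x -> v != x -> (u,v) \in F.
Proof.
by rewrite in_add_edge => /or3P [//|/andP [/eqP -> _]|/andP [_ /eqP ->]]; rewrite eqxx.
Qed.

Lemma add_edge_no_loop : (x,x) \notin F'.
Proof.
rewrite in_add_edge eqxx (negbTE x_neq_y0) /= !orbF.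
by apply/negP => /hsub; rewrite e_irr.
Qed.

Lemma add_edge_at_x v : (x,v) \in F' -> ((x,v) \in F) || (v == y0).
Proof.
rewrite in_add_edge eqxx /= => /or3P [->//|->|/andP [/eqP E _]]; rewrite ?orbT //.
by move: x_neq_y0; rewrite E eqxx.
Qed.

Lemma missing_color c a : exists2 g, g < k & missing F c a g.
Proof.
apply: missing_exists; apply: leq_ltn_trans hdk; apply: leq_trans (hdeg a).
by apply: subset_leq_card; apply/subsetP => w; rewrite !inE => /hsub.
Qed.

Definition recolor_at_x (c : V -> V -> nat) (g : V -> nat) : V -> V -> nat :=
  fun u v => if u == x then g v else if v == x then g u else c u v.

Lemma recolor_at_x_valid (c : V -> V -> nat) (g : V -> nat) :
  coloring_on F c k -> proper_on F c ->
  (forall v w, (x,v) \in F' -> (x,w) \in F' -> g v = g w -> v = w) ->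
  (forall v w, (x,v) \in F' -> (v,w) \in F -> w != x -> g v != c v w) ->
  (forall v, (x,v) \in F' -> g v < k) ->
  coloring_on F' (recolor_at_x c g) k /\ proper_on F' (recolor_at_x c g).
Proof.
move=> hok hpr g_inj g_new g_bd; split.
  move=> u v uv; rewrite /recolor_at_x; case: (eqVneq u x) => [E|ux].
    subst u; have vx : v != x by apply: contraTneq uv => ->; exact: add_edge_no_loop.
    by rewrite (negbTE vx); split => //; apply: g_bd.
  case: (eqVneq v x) => [E|vx]; last exact: hok (add_edge_off_x uv ux vx).
  by subst v; split => //; apply/g_bd/sym_add_edge.
move=> u v w uv uw; rewrite /recolor_at_x; case: (eqVneq u x) => [E|ux].
  by subst u; apply: g_inj.
case: (eqVneq v x) => [E|vx]; case: (eqVneq w x) => [E'|wx].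
- by rewrite E E'.
- move=> h; subst v; have := @g_new u w (sym_add_edge hsym uv) (add_edge_off_x uw ux wx) wx.
  by rewrite h eqxx.
- move=> h; subst w; have := @g_new u v (sym_add_edge hsym uw) (add_edge_off_x uv ux vx) vx.
  by rewrite h eqxx.
- by apply: hpr; apply: add_edge_off_x.
Qed.

(* A Vizing fan at [x] from the uncolored edge [x y0]: distinct neighbours
   [y1 .. ym] of [x] such that the color of [x y(i+1)] is missing at [yi]. *)
Definition fan (c : V -> V -> nat) (ys : seq V) :=
  [/\ uniq (y0 :: ys), (forall y, y \in ys -> (x,y) \in F) &
      forall i, i < size ys -> missing F c (nth y0 (y0 :: ys) i) (c x (nth y0 ys i))].

Lemma fan_uniq c ys : fan c ys -> uniq ys.
Proof. by case=> /= /andP []. Qed.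

Lemma fan_edge c ys i : fan c ys -> i < size ys -> (x, nth y0 ys i) \in F.
Proof. by case=> _ h _ hi; apply/h/mem_nth. Qed.

Lemma fan_size c ys : fan c ys -> (size ys).+1 <= #|V|.
Proof. by case=> hu _ _; rewrite -[(size ys).+1]/(size (y0 :: ys)) -(card_uniqP hu) max_card. Qed.

Lemma fan_adj c ys v : fan c ys -> v \in y0 :: ys -> e x v.
Proof. by case=> _ h _; rewrite in_cons => /orP [/eqP ->//|/h]; apply: hsub. Qed.

Section Shift.
Variables (c : V -> V -> nat) (ys : seq V) (g0 : nat).
Hypotheses (hok : coloring_on F c k) (hpr : proper_on F c) (hfan : fan c ys) (hg0 : g0 < k)
  (mx : missing F c x g0) (ml : missing F c (last y0 ys) g0).

Let fs := y0 :: ys.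

(* Shifting the fan: [x yi] gets the color of [x y(i+1)], the last edge gets
   the color [g0] missing at both [x] and [ym]. *)
Let shifted v := if v \in fs then
    (if index v fs < size ys then c x (nth y0 ys (index v fs)) else g0)
  else c x v.

Lemma shifted_spec v : (x,v) \in F' ->
  [\/ exists2 i, i < size ys & v = nth y0 fs i /\ shifted v = c x (nth y0 ys i),
      v = last y0 ys /\ shifted v = g0
    | [/\ v \notin fs, (x,v) \in F & shifted v = c x v]].
Proof.
move=> xv; rewrite /shifted; case: (boolP (v \in fs)) => vf; last first.
  apply: Or33; split => //; case/orP: (add_edge_at_x xv) => // /eqP E.
  by move: vf; rewrite E mem_head.
case: (ltnP (index v fs) (size ys)) => hi.
  by apply: Or31; exists (index v fs) => //; rewrite nth_index.
apply: Or32; split => //.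
have : index v fs < size fs by rewrite index_mem.
rewrite /= ltnS => hi'; have E : index v fs = size ys by apply/eqP; rewrite eqn_leq hi hi'.
by rewrite -(nth_index y0 vf) E -[size ys]/((size fs).-1) nth_last.
Qed.

Lemma shift_fan : exists c', coloring_on F' c' k /\ proper_on F' c'.
Proof.
have not_g0 i : i < size ys -> c x (nth y0 ys i) != g0.
  by move=> hi; apply: missing_neq mx (fan_edge hfan hi).
have in_fs i : i < size ys -> nth y0 ys i \in fs.
  by move=> hi; rewrite in_cons mem_nth ?orbT.
exists (recolor_at_x c shifted); apply: recolor_at_x_valid => //.
- move=> v w xv xw.
  case: (shifted_spec xv) => [[i hi [-> ->]]|[-> ->]|[vf xv' ->]];
  case: (shifted_spec xw) => [[j hj [-> ->]]|[-> ->]|[wf xw' ->]] //.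
  + move=> h; have /eqP := hpr (fan_edge hfan hi) (fan_edge hfan hj) h.
    by rewrite nth_uniq ?(fan_uniq hfan) // => /eqP ->.
  + by move=> h; move: (not_g0 _ hi); rewrite h eqxx.
  + by move=> h; have E := hpr (fan_edge hfan hi) xw' h; move: wf; rewrite -E in_fs.
  + by move=> h; move: (not_g0 _ hj); rewrite h eqxx.
  + by move=> h; move/missingP: mx => /(_ _ xw'); rewrite h eqxx.
  + by move=> h; have E := hpr (fan_edge hfan hj) xv' (esym h); move: vf; rewrite -E in_fs.
  + by move=> h; move/missingP: mx => /(_ _ xv'); rewrite h eqxx.
  + exact: hpr.
- move=> v w xv vw wx.
  case: (shifted_spec xv) => [[i hi [E ->]]|[E ->]|[vf xv' ->]].
  + by case: hfan => _ _ /(_ _ hi); rewrite -/fs -E => /missingP /(_ _ vw); rewrite eq_sym.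
  + by move/missingP: ml => /(_ w); rewrite -E eq_sym; apply.
  + have [E _] := hok xv'; rewrite E; apply: contra wx => /eqP h.
    by rewrite (hpr (hsym xv') vw h).
- move=> v xv; case: (shifted_spec xv) => [[i hi [_ ->]]|[_ ->]|[_ xv' ->]] //.
  + by case: (hok (fan_edge hfan hi)).
  + by case: (hok xv').
Qed.

End Shift.

Lemma last_take (ys : seq V) m : m <= size ys -> last y0 (take m ys) = nth y0 (y0 :: ys) m.
Proof.
move=> hm; rewrite -[last y0 _]/(last y0 (y0 :: take m ys)) -nth_last /= size_take.
case: ltnP => h; last first.
  have -> : m = size ys by apply/eqP; rewrite eqn_leq hm h.
  by rewrite take_size.
by case: m hm h => //= m hm h; rewrite nth_take.
Qed.

Lemma fan_take c ys m : fan c ys -> fan c (take m ys).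
Proof.
case=> hu hmem hmis; split.
- by rewrite -[y0 :: take m ys]/(take m.+1 (y0 :: ys)) take_uniq.
- by move=> y /mem_take /hmem.
move=> i; rewrite size_take => hi.
have [him hiy] : i < m /\ i < size ys by move: hi; case: (ltnP m (size ys)); lia.
rewrite nth_take // -[y0 :: take m ys]/(take m.+1 (y0 :: ys)) nth_take; last exact: ltnW.
exact: hmis.
Qed.

Lemma fan_extend c ys z : fan c ys -> (x,z) \in F -> z \notin y0 :: ys ->
  missing F c (last y0 ys) (c x z) -> fan c (rcons ys z).
Proof.
case=> hu hmem hmis xz zf mz; split.
- by rewrite -rcons_cons rcons_uniq zf.
- by move=> y; rewrite mem_rcons in_cons => /orP [/eqP ->|/hmem].
move=> i; rewrite size_rcons ltnS leq_eqVlt => /orP [/eqP Ei|hi].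
  rewrite -rcons_cons nth_rcons /= ltnS Ei leqnn nth_rcons ltnn eqxx.
  by rewrite -[size ys]/((size (y0 :: ys)).-1) nth_last.
by rewrite -rcons_cons !nth_rcons /= ltnS (ltnW hi) hi; apply: hmis.
Qed.

Lemma fan_swap c ys (H : {set V}) al g : fan c ys -> x \notin H -> missing F c x al ->
  (forall i, i < size ys -> c x (nth y0 ys i) = g -> nth y0 (y0 :: ys) i \notin H) ->
  fan (swap_on H al g c) ys.
Proof.
move=> hf xH mxa hg; have [hu hmem hmis] := hf; split => // i hi.
rewrite missing_swap_on /swap_on (negbTE xH).
case: ifP => inH; last exact: hmis.
have nal : c x (nth y0 ys i) != al by apply: missing_neq mxa (fan_edge hf hi).
have ng : c x (nth y0 ys i) != g by apply/eqP => /(hg i hi); rewrite inH.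
by rewrite swap_id //; apply: hmis.
Qed.

(* Swapping on the Kempe component of the fan's end, which avoids [x],
   makes [al] missing at both [x] and the end, so the fan can be shifted. *)
Lemma kempe_shift c ys al g : coloring_on F c k -> proper_on F c -> fan c ys ->
  al < k -> g < k -> missing F c x al -> missing F c (last y0 ys) g ->
  x \notin kempe_comp F c al g (last y0 ys) ->
  (forall i, i < size ys -> c x (nth y0 ys i) = g ->
     nth y0 (y0 :: ys) i \notin kempe_comp F c al g (last y0 ys)) ->
  exists c', coloring_on F' c' k /\ proper_on F' c'.
Proof.
move=> hok hpr hf alk gk mxa ml xH hg.
have [ok' pr'] := swap_kempe_comp hsym hok hpr (last y0 ys) alk gk.
apply: (shift_fan ok' pr' _ alk).
- exact: fan_swap hf xH mxa hg.
- by rewrite missing_swap_on (negbTE xH).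
- by rewrite missing_swap_on inE connect0 /swap eqxx.
Qed.

(* If the color [g] missing at the fan's end colors an edge [x z] back into the
   fan, take [al] missing at [x]. Of the three vertices [x], the end [q] and the
   predecessor [p] of [z], each has at most one [al]/[g]-Kempe neighbour, so they
   cannot all lie on one Kempe path: either [q]'s component avoids [x] (swap it,
   shift the whole fan) or [p]'s does (swap it, shift the fan up to [p]). *)
Lemma kempe_fan_step c ys g z : coloring_on F c k -> proper_on F c -> fan c ys ->
  g < k -> missing F c (last y0 ys) g -> (x,z) \in F -> c x z = g -> z \in y0 :: ys ->
  exists c', coloring_on F' c' k /\ proper_on F' c'.
Proof.
move=> hok hpr hf gk ml xz cz zf.
have [al alk mxa] := missing_color c x.
have [hu _ hmis] := hf; have uys := fan_uniq hf.
have [jj hjj Ez] : exists2 jj, jj < size ys & z = nth y0 ys jj.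
  have zy0 : z != y0 by apply: contraNneq nF => <-.
  move: zf; rewrite in_cons (negbTE zy0) /= => zys.
  by exists (index z ys); rewrite ?index_mem ?nth_index.
set p := nth y0 (y0 :: ys) jj; set q := last y0 ys.
have mp : missing F c p g by rewrite -cz Ez; apply: hmis.
have only_z i : i < size ys -> c x (nth y0 ys i) = g -> i = jj.
  move=> hi h; have /eqP := hpr _ _ _ (fan_edge hf hi) xz (etrans h (esym cz)).
  by rewrite Ez nth_uniq // => /eqP.
set r := kempe F c al g.
have csym := sym_connect_sym (kempe_sym al g hsym hok).
have end_x := kempe_end hpr (be := g) (a := x) (introT orP (or_introl mxa)).
have end_p := kempe_end hpr (al := al) (a := p) (introT orP (or_intror mp)).
have end_q := kempe_end hpr (al := al) (a := q) (introT orP (or_intror ml)).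
have not_x v : v \in y0 :: ys -> v != x.
  by move/(fan_adj hf) => exv; apply: contraTneq exv => ->; rewrite e_irr.
have px : p != x by apply/not_x/mem_nth; rewrite /= ltnW.
have qx : q != x by apply/not_x/mem_last.
have pq : p != q.
  rewrite /p /q -[last _ _]/(last y0 (y0 :: ys)) -nth_last.
  rewrite (nth_uniq y0 _ _ hu); first by rewrite neq_ltn hjj.
  - by rewrite ltnS ltnW.
  - by rewrite ltnSn.
have no_path := three_ends (kempe_sym al g hsym hok) (kempe_deg2 hpr) end_x end_p end_q px qx pq.
case cp: (connect r x p).
  have cq : ~~ connect r x q by apply/negP; apply: no_path.
  apply: (kempe_shift hok hpr hf alk gk mxa ml); first by rewrite inE csym.
  move=> i hi /(only_z _ hi) ->; rewrite inE; apply: contra cq => cqp.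
  by rewrite (connect_trans cp) // csym.
apply: (kempe_shift (ys := take jj ys) hok hpr (fan_take jj hf) alk gk mxa);
  rewrite last_take ?(ltnW hjj) //; first by rewrite inE csym cp.
move=> i; rewrite size_take hjj => hi; rewrite nth_take // => /(only_z _ (ltn_trans hi hjj)).
by move=> E; move: hi; rewrite E ltnn.
Qed.

Lemma fan_step c ys : coloring_on F c k -> proper_on F c -> fan c ys ->
  (exists c', coloring_on F' c' k /\ proper_on F' c') \/ (exists z, fan c (rcons ys z)).
Proof.
move=> hok hpr hf.
have [g gk ml] := missing_color c (last y0 ys).
case mxg: (missing F c x g); first by left; apply: (shift_fan hok hpr hf gk mxg ml).
have [z xz cz] : exists2 z, (x,z) \in F & c x z = g.
  move/negbT: mxg; rewrite negb_forall => /existsP [z].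
  by rewrite negb_imply negbK => /andP [xz /eqP cz]; exists z.
case zf: (z \in y0 :: ys); first by left; apply: (kempe_fan_step hok hpr hf gk ml xz cz zf).
by right; exists z; apply: fan_extend; rewrite ?zf ?cz.
Qed.

(* Vizing's extension step: a proper coloring with [k > d] colors extends to
   one more edge. Fans have distinct vertices, so they cannot grow forever. *)
Lemma vizing_extend c : coloring_on F c k -> proper_on F c ->
  exists c', coloring_on F' c' k /\ proper_on F' c'.
Proof.
move=> hok hpr.
suff H n ys : #|V| - size ys <= n -> fan c ys -> exists c', coloring_on F' c' k /\ proper_on F' c'.
  by apply: (H #|V| [::]); rewrite ?subn0 //; split => //= i.
elim: n ys => [|n IH] ys hn hf; case: (fan_step hok hpr hf) => // -[z hz].
  by have := fan_size hz; rewrite size_rcons; move: hn; lia.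
apply: (IH _ _ hz); have := fan_size hz; rewrite size_rcons; move: hn; lia.
Qed.

End Vizing.

Lemma vizing (V : finType) (e : rel V) : symmetric e -> irreflexive e ->
  exists c, coloring_on [set p | e p.1 p.2] c (maxdeg e).+1 /\
            proper_on [set p | e p.1 p.2] c.
Proof.
move=> e_sym e_irr.
have hdeg a : #|[set w | e a w]| <= maxdeg e by apply: (@leq_bigmax _ (fun u => deg e u) a).
apply: (edge_induction (P := fun F => exists c, coloring_on F c (maxdeg e).+1 /\ proper_on F c)).
- exact: e_sym.
- move=> F u v hs hsub euv nF [c [hok hpr]].
  exact: (vizing_extend e_irr hdeg (ltnSn _) hs hsub euv nF hok hpr).
- by exists (fun _ _ => 0); split => u v; rewrite inE.
Qed.

Section Neighbourhoods.
Variables (V : finType) (rot : V -> seq V) (L : nat).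

Lemma rotate_forward_back i j k : 0 < k -> i < k -> ((i + j) %% k + (k - j %% k)) %% k = i.
Proof.
move=> kp ik; rewrite modnDml.
have -> : i + j + (k - j %% k) = (j %/ k).+1 * k + i.
  rewrite mulSn {1}(divn_eq j k); move: (j %/ k * k) (j %% k) (ltn_pmod j kp) => A B hB; lia.
by rewrite modnMDl modn_small.
Qed.

Lemma rotate_back_forward i j k : 0 < k -> i < k -> ((i + (k - j %% k)) %% k + j) %% k = i.
Proof.
move=> kp ik; rewrite modnDml.
have -> : i + (k - j %% k) + j = (j %/ k).+1 * k + i.
  rewrite mulSn {2}(divn_eq j k); move: (j %/ k * k) (j %% k) (ltn_pmod j kp) => A B hB; lia.
by rewrite modnMDl modn_small.
Qed.

Lemma Lnbhd_mem u v w : v \in rot u -> in_Lnbhd rot L u v w -> w \in rot u.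
Proof.
move=> vr; have kp : 0 < size (rot u) by case: (rot u) vr.
by move=> /andP [_ /hasP [j _ /orP [/eqP ->|/eqP ->]]]; apply: mem_nth; exact: ltn_pmod.
Qed.

Lemma Lnbhd_sym u v w : uniq (rot u) -> v \in rot u ->
  in_Lnbhd rot L u v w -> in_Lnbhd rot L u w v.
Proof.
move=> ur vr h; have wr := Lnbhd_mem vr h; move: h.
have kp : 0 < size (rot u) by case: (rot u) vr.
have ik : index v (rot u) < size (rot u) by rewrite index_mem.
move=> /andP [wv /hasP [j hj /orP [/eqP E|/eqP E]]]; rewrite /in_Lnbhd eq_sym wv /=;
  apply/hasP; exists j => //.
  have -> : index w (rot u) = (index v (rot u) + j) %% size (rot u).
    by rewrite E index_uniq // ltn_pmod.
  by rewrite rotate_forward_back // nth_index // eqxx orbT.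
have -> : index w (rot u) = (index v (rot u) + (size (rot u) - j %% size (rot u))) %% size (rot u).
  by rewrite E index_uniq // ltn_pmod.
by rewrite rotate_back_forward // nth_index // eqxx.
Qed.

Lemma Lnbhd_size u v : ~~ odd L -> uniq (rot u) ->
  size [seq w <- rot u | in_Lnbhd rot L u v w] <= L.
Proof.
move=> ev ur; set s := rot u; set k := size s; set i := index v s.
pose cand := [seq nth v s ((i + j) %% k) | j <- iota 1 L./2] ++
             [seq nth v s ((i + (k - j %% k)) %% k) | j <- iota 1 L./2].
apply: (@leq_trans (size cand)); last first.
  rewrite size_cat !size_map size_iota addnn.
  by have := odd_double_half L; rewrite (negbTE ev) add0n => ->.
apply: uniq_leq_size; first exact: filter_uniq.
move=> w; rewrite mem_filter => /andP [/andP [_ /hasP [j hj /orP [/eqP E|/eqP E]]] _];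
  rewrite mem_cat E; apply/orP; [left|right]; by apply/mapP; exists j.
Qed.

Definition localized_on (F : {set V * V}) (c : V -> V -> nat) :=
  forall u v w, (u,v) \in F -> (u,w) \in F -> in_Lnbhd rot L u v w -> c u w != c u v.

(* A proper coloring is L-localized, since an edge is not its own L-neighbour. *)
Lemma proper_localized F c : proper_on F c -> localized_on F c.
Proof.
move=> hpr u v w uv uw /andP [wv _]; apply: contra wv => /eqP h.
by rewrite (hpr _ _ _ uw uv h).
Qed.

End Neighbourhoods.

Lemma free_color (s : seq nat) n : size s <= n -> exists2 g, g < n.+1 & g \notin s.
Proof.
move=> hs; case: (boolP (all (fun g => g \in s) (iota 0 n.+1))) => [/allP h|/allPn [g hg gs]].
  by have := uniq_leq_size (iota_uniq 0 n.+1) h; rewrite size_iota ltnNge hs.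
by exists g; rewrite // mem_iota in hg.
Qed.

Section Greedy.
Variables (V : finType) (e : rel V) (rot : V -> seq V) (L : nat).
Hypotheses (e_sym : symmetric e) (hrot : is_rotation e rot) (hL : ~~ odd L).

(* Greedy step: a new edge sees at most [L] colored L-neighbours around each
   endpoint, so one of [2L + 1] colors is free for it. *)
Lemma greedy_extend F u0 v0 c : sym_edges F -> (forall a b, (a,b) \in F -> e a b) ->
  e u0 v0 -> (u0,v0) \notin F -> coloring_on F c (2 * L).+1 -> localized_on rot L F c ->
  exists c', coloring_on (add_edge F u0 v0) c' (2 * L).+1 /\
             localized_on rot L (add_edge F u0 v0) c'.
Proof.
move=> hs hsub e0 n0 hok hloc.
pose near_colors a b := [seq c a w | w <- [seq w <- rot a | in_Lnbhd rot L a b w]].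
have [g gk gS] : exists2 g, g < (2 * L).+1 & g \notin near_colors u0 v0 ++ near_colors v0 u0.
  by apply: free_color; rewrite size_cat !size_map mul2n -addnn leq_add ?Lnbhd_size //;
    case: (hrot u0); case: (hrot v0).
pose nw u v := ((u == u0) && (v == v0)) || ((u == v0) && (v == u0)).
have inF' u v : ((u,v) \in add_edge F u0 v0) = ((u,v) \in F) || nw u v.
  by rewrite in_add_edge orbA.
have nwC u v : nw u v = nw v u by rewrite /nw orbC; congr (_ || _); rewrite andbC.
have free a b : nw a b -> forall w, (a,w) \in F -> in_Lnbhd rot L a b w -> c a w != g.
  move=> nab w aw h; apply: contraNneq gS => <-.
  have wr : w \in rot a by rewrite (proj2 (hrot a)) hsub.
  rewrite mem_cat; case/orP: nab => /andP [/eqP Ea /eqP Eb]; subst a b; apply/orP;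
    [left|right]; by apply: map_f; rewrite mem_filter h wr.
exists (fun u v => if nw u v then g else c u v); split.
  move=> u v; rewrite inF' nwC; case: (boolP (nw v u)) => /= _; rewrite ?orbT ?orbF //.
  exact: hok.
move=> u v w; rewrite !inF' => uv uw h.
have wv : w != v by case/andP: h.
have vr : v \in rot u -> in_Lnbhd rot L u w v by move/Lnbhd_sym; apply; case: (hrot u).
case: (boolP (nw u v)) => nuv; case: (boolP (nw u w)) => nuw /=.
- apply: contraNneq wv => _; move: nuv nuw.
  by case/orP=> /andP [/eqP -> /eqP ->]; case/orP=> /andP [/eqP E /eqP ->]; rewrite // E.
- by rewrite (negbTE nuw) orbF in uw; exact: (free u v nuv w uw h).
- rewrite (negbTE nuv) orbF in uv; rewrite eq_sym; apply: (free u w nuw v uv).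
  by apply: vr; rewrite (proj2 (hrot u)) (hsub _ _ uv).
- by rewrite (negbTE nuv) orbF in uv; rewrite (negbTE nuw) orbF in uw; apply: hloc.
Qed.

Lemma greedy_localized : exists c, coloring_on [set p | e p.1 p.2] c (2 * L).+1 /\
                                   localized_on rot L [set p | e p.1 p.2] c.
Proof.
apply: (edge_induction
  (P := fun F => exists c, coloring_on F c (2 * L).+1 /\ localized_on rot L F c) e_sym).
  move=> F u v hs hsub euv nF [c [hok hloc]].
  exact: (greedy_extend hs hsub euv nF hok hloc).
by exists (fun _ _ => 0); split => u v; rewrite inE.
Qed.

End Greedy.

Lemma coloring_on_edges (V : finType) (e : rel V) c k :
  coloring_on [set p | e p.1 p.2] c k ->
  edge_coloring e c /\ (forall u v, e u v -> c u v < k).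
Proof. by move=> hok; split=> u v uv; have [] := hok u v; rewrite ?inE. Qed.

Lemma localized_on_edges (V : finType) (e : rel V) (rot : V -> seq V) L c :
  is_rotation e rot -> localized_on rot L [set p | e p.1 p.2] c -> L_localized e rot L c.
Proof.
move=> hrot hloc u v w uv h; have vr : v \in rot u by rewrite (proj2 (hrot u)).
by apply: (hloc u v w); rewrite ?inE //= -(proj2 (hrot u)) (Lnbhd_mem vr h).
Qed.

Theorem mainTheorem3 (V : finType) (e : rel V)
  (e_sym : symmetric e) (e_irr : irreflexive e)
  (rot : V -> seq V) (hrot : is_rotation e rot)
  (L : nat) (hL2 : 2 <= L) (hLeven : ~~ odd L) :
  exists c : V -> V -> nat,
    [/\ edge_coloring e c, L_localized e rot L c &
        forall u v, e u v -> c u v < (minn (maxdeg e) (2 * L)).+1].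
Proof.
set E := [set p | e p.1 p.2].
suff [c [hok hloc]] : exists c, coloring_on E c (minn (maxdeg e) (2 * L)).+1 /\
                                localized_on rot L E c.
  have [hcol hbd] := coloring_on_edges hok.
  by exists c; split => //; apply: localized_on_edges.
case: (leqP (maxdeg e) (2 * L)) => _.
  have [c [hok hpr]] := vizing e_sym e_irr.
  by exists c; split => //; apply: proper_localized.
exact: greedy_localized.
Qed.
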